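(* Assume $b_1<n^*$ and $b_2<m^*$. (i) For every minimal set cover $S'\subseteq\mathcal V$, $$\max_{\sigma^1\in\Delta(\mathcal A_1):\ \text{node basis of }\sigma^1\subseteq S'}\ \min_{T\in\mathcal A_2}\bigl(-U_2(\sigma^1,T)\bigr)=b_2\Bigl(\frac{b_1}{|S'|}-1\Bigr),$$ and the maximum is attained by $\sigma^1(S',b_1)$. (ii) For every set packing $T'\subseteq\mathcal E$ with $|T'|\ge b_2$, $$\max_{\sigma^2\in\Delta(\mathcal A_2):\ \text{component basis of }\sigma^2\subseteq T'}\ \min_{S\in\mathcal A_1}U_2(S,\sigma^2)=\max\Bigl\{0,\ b_2\Bigl(1-\frac{b_1}{|T'|}\Bigr)\Bigr\},$$ and the maximum is attained by $\sigma^2(T',b_2)$.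
   Context: Detection model: finite nonempty sets $\mathcal V$ (nodes), $\mathcal E$ (components), monitoring sets $\mathcal C_i\subseteq\mathcal E$ for $i\in\mathcal V$ with every $e\in\mathcal E$ in some $\mathcal C_i$; $\mathcal C_S=\bigcup_{i\in S}\mathcal C_i$; $F(S,T)=|\mathcal C_S\cap T|$. A set cover is $S\subseteq\mathcal V$ with $\mathcal C_S=\mathcal E$; it is minimal if no proper subset is a set cover; $n^*$ is the minimum size of a set cover. A set packing is $T\subseteq\mathcal E$ with $|\mathcal C_i\cap T|\le1$ for all $i$; $m^*$ is the maximum size of a set packing. Game $\Gamma(b_1,b_2)$ for positive integers $b_1,b_2$: $\mathcal A_1=\{S\subseteq\mathcal V:|S|\le b_1\}$, $\mathcal A_2=\{T\subseteq\mathcal E:|T|\le b_2\}$, mixed strategies $\sigma^1\in\Delta(\mathcal A_1)$, $\sigma^2\in\Delta(\mathcal A_2)$ drawn independently; $U_1(\sigma^1,\sigma^2)=\mathbb E[F(S,T)]$, $U_2(\sigma^1,\sigma^2)=\mathbb E[|T|]-\mathbb E[F(S,T)]$ with $S\sim\sigma^1$, $T\sim\sigma^2$; pure actions are identified with point masses. Node basis of $\sigma^1$: $\{i:\mathbb P_{\sigma^1}(i\in S)>0\}$; component basis of $\sigma^2$: $\{e:\mathbb P_{\sigma^2}(e\in T)>0\}$. Cyclic strategies: for $S=\{i_1,\dots,i_n\}$ (fixed enumeration) with $n\ge b_1$, $S^k=\{i_k,\dots,i_{k+b_1-1}\}$ with indices cyclic mod $n$, $k=1,\dots,n$, and $\sigma^1(S,b_1)$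 puts probability $1/n$ on each $S^k$; analogously for $T=\{e_1,\dots,e_m\}$ with $m\ge b_2$, $T^l=\{e_l,\dots,e_{l+b_2-1}\}$ cyclically and $\sigma^2(T,b_2)$ puts probability $1/m$ on each $T^l$. *)

From HB Require Import structures.
From mathcomp Require Import all_boot all_order all_algebra.
Set Implicit Arguments. Unset Strict Implicit. Unset Printing Implicit Defensive.
Import Order.TTheory GRing.Theory Num.Theory.

(* Detection model: V nodes, E components, C i = monitoring set of node i. *)

Definition CS (V E : finType) (C : V -> {set E}) (S : {set V}) : {set E} :=
  \bigcup_(i in S) C i.

Definition Fdet (V E : finType) (C : V -> {set E}) (S : {set V}) (T : {set E}) : nat :=
  #|CS C S :&: T|.

Definition set_cover (V E : finType) (C : V -> {set E}) (S : {set V}) : bool :=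
  CS C S == [set: E].

Definition minimal_set_cover (V E : finType) (C : V -> {set E}) (S : {set V}) : Prop :=
  set_cover C S /\ forall S' : {set V}, S' \proper S -> ~~ set_cover C S'.

(* n^* : minimum size of a set cover (setT is a cover under the coverage assumption) *)
Definition nstar (V E : finType) (C : V -> {set E}) : nat :=
  \big[minn/#|V|]_(S : {set V} | set_cover C S) #|S|.

Definition set_packing (V E : finType) (C : V -> {set E}) (T : {set E}) : bool :=
  [forall i : V, #|C i :&: T| <= 1].

Definition mstar (V E : finType) (C : V -> {set E}) : nat :=
  \max_(T : {set E} | set_packing C T) #|T|.

Local Open Scope ring_scope.

Definition mixed (R : realFieldType) (T : finType) (b : nat) (sigma : {set T} -> R) : Prop :=
  (forall A : {set T}, 0 <= sigma A) /\ (forall A : {set T}, (b < #|A|)%N -> sigma A = 0) /\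
  \sum_(A : {set T}) sigma A = 1.

Definition point (R : realFieldType) (T : finType) (A : {set T}) : {set T} -> R :=
  fun B => if B == A then 1 else 0.

Definition prob_in (R : realFieldType) (T : finType) (sigma : {set T} -> R) (x : T) : R :=
  \sum_(A : {set T} | x \in A) sigma A.

Definition basis_sub (R : realFieldType) (T : finType) (sigma : {set T} -> R) (X : {set T}) : Prop :=
  forall x, 0 < prob_in sigma x -> x \in X.

Definition U1 (R : realFieldType) (V E : finType) (C : V -> {set E})
  (sigma1 : {set V} -> R) (sigma2 : {set E} -> R) : R :=
  \sum_(S : {set V}) \sum_(T : {set E}) sigma1 S * sigma2 T * (Fdet C S T)%:R.

Definition U2 (R : realFieldType) (V E : finType) (C : V -> {set E})
  (sigma1 : {set V} -> R) (sigma2 : {set E} -> R) : R :=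
  \sum_(S : {set V}) \sum_(T : {set E}) sigma1 S * sigma2 T * (#|T|%:R - (Fdet C S T)%:R).

(* Cyclic strategy for the enumeration s = [x_1; ...; x_n] (uniq) and budget b:
   window k (0-indexed) is {x_k, ..., x_{k+b-1}} cyclically = take b (rot k s);
   each of the n windows gets probability 1/n (coinciding windows add up). *)
Definition window (T : finType) (s : seq T) (b k : nat) : {set T} :=
  [set x in take b (rot k s)].

Definition cyclic (R : realFieldType) (T : finType) (s : seq T) (b : nat) : {set T} -> R :=
  fun A => (count (fun k => window s b k == A) (iota 0 (size s)))%:R / (size s)%:R.

From HB Require Import structures.
From mathcomp Require Import all_boot all_order all_algebra.
From mathcomp Require Import zify ring lra.
Import Order.TTheory GRing.Theory Num.Theory.

Set Implicit Arguments.
Unset Strict Implicit.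
Unset Printing Implicit Defensive.

(* (i) If s enumerates a cover S', each node of S' lies in exactly b1 of the
   |S'| cyclic windows, so every attacked component is detected with
   probability at least b1/|S'|.  Minimality gives each node of S' a private
   component, seen by no other node of S'; attacking the private components of
   a random b2-window of S', a defender playing at most b1 nodes of S' detects
   on average at most b1 b2/|S'| of them.
   (ii) Dually, on a set packing T' a node set S detects at most min(|S|, |T'|)
   components, while covering a random b1-window of T' with one node per
   component detects on average a fraction min(b1, |T'|)/|T'| of any attack
   supported in T'.
   The values are attained because the averaging bound applied to the cyclic
   strategy meets the uniform bound that strategy satisfies. *)

Lemma nth_rot_mod (T : Type) (x0 : T) (s : seq T) k i :
  (k <= size s)%N -> (i < size s)%N ->
  nth x0 (rot k s) i = nth x0 s ((k + i) %% size s).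
Proof.
move=> hk hi; rewrite /rot nth_cat size_drop.
case: ltnP => h; first by rewrite nth_drop modn_small //; lia.
rewrite nth_take; last by lia.
have -> : k + i = (i - (size s - k)) + size s by lia.
by rewrite modnDr modn_small //; lia.
Qed.

Lemma nth_rot_swap (T : Type) (x0 : T) (s : seq T) k i :
  (k < size s)%N -> (i < size s)%N -> nth x0 (rot k s) i = nth x0 (rot i s) k.
Proof. by move=> hk hi; rewrite !nth_rot_mod 1?addnC // ltnW. Qed.

Lemma card_setI_sum (T : finType) (A B : {set T}) :
  #|A :&: B| = (\sum_(x in B) (x \in A))%N.
Proof.
rewrite -sum1_card big_mkcond [RHS]big_mkcond /=.
by apply: eq_bigr => x _; rewrite inE; case: (x \in A); case: (x \in B).
Qed.

Local Open Scope ring_scope.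

Section Windows.

Variables (T : finType) (s : seq T).
Hypothesis s_uniq : uniq s.

Lemma card_window b k : #|window s b k| = minn b (size s).
Proof.
rewrite /window cardsE.
have /card_uniqP -> : uniq (take b (rot k s)) by rewrite take_uniq // rot_uniq.
by rewrite size_take size_rot /minn; case: ltnP.
Qed.

Lemma mem_window b k x : x \in window s b k -> x \in s.
Proof. by rewrite inE => /mem_take; rewrite mem_rot. Qed.

Lemma window_minn b k : window s b k = window s (minn b (size s)) k.
Proof.
rewrite /window /minn; case: ltnP => // h.
by rewrite !take_oversize // size_rot // ltnW.
Qed.

(* Window [k] lists the [i]-th items of [rot k s], [i < b]; swapping [i] and
   [k] turns the double sum into [b] sums over rotations of [s]. *)
Lemma sum_window (M : nmodType) b (f : T -> M) : (b <= size s)%N ->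
  \sum_(k < size s) \sum_(x in window s b k) f x = (\sum_(x <- s) f x) *+ b.
Proof.
case Es: s => [|x0 s']; first by rewrite /= big_ord0 big_nil mul0rn.
rewrite -Es => hb.
have hi (i : 'I_b) : (i < size s)%N by exact: leq_trans (ltn_ord i) hb.
rewrite (eq_bigr (fun k : 'I_(size s) => \sum_(i < b) f (nth x0 (rot i s) k))).
  rewrite exchange_big /= -[in RHS](card_ord b) -sumr_const; apply: eq_bigr => i _.
  have rot_s : perm_eq (rot i s) s by rewrite perm_rot.
  by rewrite -(perm_big _ rot_s) (big_nth x0) size_rot big_mkord.
move=> k _; rewrite (eq_bigl (mem (take b (rot k s)))); last by move=> x; rewrite inE.
rewrite -big_uniq /=; last by rewrite take_uniq // rot_uniq.
rewrite (big_nth x0) size_take size_rot -/(minn b (size s)) (minn_idPl hb) big_mkord.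
by apply: eq_bigr => i _; rewrite nth_take // nth_rot_swap.
Qed.

Lemma sum_card_setI_window b (A : {set T}) :
  (b <= size s)%N -> {subset A <= s} ->
  (\sum_(k < size s) #|A :&: window s b k| = #|A| * b)%N.
Proof.
move=> hb sA; under eq_bigr => k _ do rewrite card_setI_sum.
rewrite sum_window // -mulr_natr natn; congr (_ * b)%N.
transitivity (count (mem A) s); first by rewrite -sum1_count [RHS]big_mkcond.
rewrite -size_filter -(card_uniqP (filter_uniq _ s_uniq)).
by apply: eq_card => x; rewrite mem_filter; apply: andb_idr => /sA.
Qed.

Lemma sum_mem_window b x : (b <= size s)%N -> x \in s ->
  (\sum_(k < size s) (x \in window s b k) = b)%N.
Proof.
move=> hb xs; rewrite -[RHS]mul1n -(cards1 x) -sum_card_setI_window //; last first.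
  by move=> y /set1P ->.
by apply: eq_bigr => k _; rewrite setIC card_setI_sum big_set1.
Qed.

End Windows.

Section CyclicStrategy.

Variables (R : realFieldType) (T : finType) (s : seq T) (b : nat).

Lemma sum_cyclic_mul (g : {set T} -> R) :
  \sum_(A : {set T}) cyclic R s b A * g A =
  (\sum_(k < size s) g (window s b k)) / (size s)%:R.
Proof.
have g_window (k : 'I_(size s)) :
    g (window s b k) = \sum_(A : {set T}) (window s b k == A)%:R * g A.
  rewrite (bigD1 (window s b k)) //= eqxx mul1r big1 ?addr0 // => A.
  by rewrite eq_sym => /negbTE ->; rewrite mul0r.
rewrite (eq_bigr _ (fun k _ => g_window k)) exchange_big mulr_suml.
apply: eq_bigr => A _; rewrite -mulr_suml /cyclic -sum1_count big_mkcond natr_sum.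
rewrite -(big_mkord xpredT (fun k => (window s b k == A)%:R)) mulrAC /index_iota subn0.
by congr (_ * _ / _); apply: eq_big => // k _; case: eqP.
Qed.

Lemma basis_sub_cyclic (X : {set T}) : {subset s <= X} -> basis_sub (cyclic R s b) X.
Proof.
move=> sX x; rewrite /prob_in.
have -> : \sum_(A : {set T} | x \in A) cyclic R s b A =
          \sum_(A : {set T}) cyclic R s b A * (x \in A)%:R.
  by rewrite big_mkcond; apply: eq_bigr => A _; case: (x \in A); rewrite ?mulr1 ?mulr0.
rewrite sum_cyclic_mul; case: (boolP (x \in s)) => [/sX //|xNs].
by rewrite big1 ?mul0r ?ltxx // => k _; rewrite (contraNF (@mem_window _ _ _ _ x) xNs).
Qed.

Hypothesis s_uniq : uniq s.

Lemma mixed_cyclic : (0 < size s)%N -> mixed b (cyclic R s b).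
Proof.
move=> s_gt0; split; [|split].
- by move=> A; rewrite /cyclic divr_ge0 // ler0n.
- move=> A bA; rewrite /cyclic; apply/eqP; rewrite mulf_eq0 pnatr_eq0 -leqn0 leqNgt.
  rewrite -has_count; apply/orP; left; apply/hasPn => k _; apply/eqP => wA.
  by move: bA; rewrite -wA card_window // ltnNge geq_minl.
- under eq_bigr => A _ do rewrite -[cyclic R s b A]mulr1.
  rewrite sum_cyclic_mul sumr_const card_ord -[X in X / _]mulr_natl mulr1 divff //.
  by rewrite pnatr_eq0 -lt0n.
Qed.

End CyclicStrategy.

Section MixedStrategy.

Variables (R : realFieldType) (T : finType) (b : nat) (sigma : {set T} -> R) (X : {set T}).
Hypotheses (sigma_mixed : mixed b sigma) (sigma_basis : basis_sub sigma X).

Lemma mixed_support A : sigma A != 0 -> (#|A| <= b)%N /\ A \subset X.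
Proof.
case: sigma_mixed => ge0 [out0 _] nz; split.
  by rewrite leqNgt; apply: contra nz => /out0 ->.
apply/subsetP => x xA; apply: sigma_basis; rewrite /prob_in (bigD1 A) //=.
by rewrite ltr_pwDl ?lt_def ?nz ?ge0 // sumr_ge0.
Qed.

Lemma mixed_sum_le (g : {set T} -> R) c :
  (forall A : {set T}, (#|A| <= b)%N -> A \subset X -> g A <= c) ->
  \sum_(A : {set T}) sigma A * g A <= c.
Proof.
case: sigma_mixed => ge0 [_ sum1] g_le; rewrite -[c]mul1r -sum1 mulr_suml.
apply: ler_sum => A _; case: (eqVneq (sigma A) 0) => [->|nz]; first by rewrite !mul0r.
by have [bA AX] := mixed_support nz; rewrite ler_wpM2l ?ge0 ?g_le.
Qed.

End MixedStrategy.

Lemma exists_le_mean (R : realFieldType) n (x : 'I_n -> R) (v : R) :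
  (0 < n)%N -> \sum_(k < n) x k <= n%:R * v -> exists k, x k <= v.
Proof.
move=> n_gt0 sum_le; apply/existsP; apply: contraLR sum_le => /existsPn gt_v.
rewrite -ltNge mulr_natl -[n in _ *+ n]card_ord -sumr_const; apply: ltr_sum.
  by apply/hasP; exists (Ordinal n_gt0); rewrite ?mem_index_enum.
by move=> k _; rewrite ltNge gt_v.
Qed.

Section Detection.

Variables (R : realFieldType) (V E : finType) (C : V -> {set E}).

Lemma U2_point_l (sigma2 : {set E} -> R) (S : {set V}) :
  U2 C (point R S) sigma2 = \sum_(T : {set E}) sigma2 T * (#|T|%:R - (Fdet C S T)%:R).
Proof.
rewrite /U2 (bigD1 S) //= /point eqxx [X in _ + X]big1 ?addr0; last first.
  by move=> S' /negbTE ->; apply: big1 => T _; rewrite !mul0r.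
by apply: eq_bigr => T _; rewrite mul1r.
Qed.

Lemma oppr_U2_point_r (sigma1 : {set V} -> R) (T : {set E}) :
  - U2 C sigma1 (point R T) = \sum_(S : {set V}) sigma1 S * ((Fdet C S T)%:R - #|T|%:R).
Proof.
rewrite -sumrN; apply: eq_bigr => S _; rewrite (bigD1 T) //= /point eqxx mulr1.
rewrite big1 ?addr0 => [|T' /negbTE ->]; last by rewrite mulr0 mul0r.
by rewrite -mulrN opprB.
Qed.

Lemma nstar_le_cover S : set_cover C S -> (nstar C <= #|S|)%N.
Proof.
move=> coverS; rewrite /nstar -minEnat.
exact: (bigmin_le_cond _ (fun A : {set V} => #|A|) coverS).
Qed.

Lemma Fdet_packing_le S T : set_packing C T -> (Fdet C S T <= #|S|)%N.
Proof.
move=> /forallP packT; rewrite /Fdet /CS -big_enum [#|S|]cardE.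
elim: (enum S) => [|i l IH]; first by rewrite big_nil set0I cards0.
rewrite big_cons setIUl /=; apply: leq_trans (leq_card_setU _ _).1 _.
by rewrite -add1n leq_add.
Qed.

Lemma mstar_le_cover S : set_cover C S -> (mstar C <= #|S|)%N.
Proof.
move=> /eqP coverS; apply/bigmax_leqP => T packT.
by have := Fdet_packing_le S packT; rewrite /Fdet coverS setTI.
Qed.

End Detection.

Section PrivateElements.

Variables (V E : finType) (C : V -> {set E}).

Lemma minimal_set_cover_private S i : minimal_set_cover C S -> i \in S ->
  exists2 e, e \in C i & {in S, forall j, e \in C j -> j = i}.
Proof.
move=> [/eqP coverS minS] iS.
case: (boolP [exists e, (e \in C i) && [forall j in S, (e \in C j) ==> (j == i)]]).
  move=> /existsP [e /andP [eCi /forall_inP priv]]; exists e => // j jS eCj.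
  exact/eqP/(implyP (priv j jS)).
move=> /existsPn noPriv; case/negP: (minS _ (properD1 iS)).
apply/eqP/setP => e; rewrite inE.
have /bigcupP [j jS eCj] : e \in CS C S by rewrite coverS inE.
have [ji|] := eqVneq j i; last by move=> ji; apply/bigcupP; exists j; rewrite // !inE ji.
move: (noPriv e); rewrite -ji eCj /= => /forall_inPn [k kS].
by rewrite negb_imply => /andP [eCk kj]; apply/bigcupP; exists k; rewrite // !inE kj.
Qed.

Lemma minimal_set_cover_private_map S : minimal_set_cover C S -> (0 < #|E|)%N ->
  exists2 pe : V -> E,
    {in S, forall i, pe i \in C i} & {in S &, forall i j, pe i \in C j -> j = i}.
Proof.
move=> minS /card_gt0P [e0 _].
pose private i e := (e \in C i) && [forall j in S, (e \in C j) ==> (j == i)].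
pose pe i := odflt e0 [pick e | private i e].
have pe_private i : i \in S -> private i (pe i).
  rewrite /pe => iS; case: pickP => [//|none].
  have [e eCi eP] := minimal_set_cover_private minS iS.
  move: (none e); rewrite /private eCi /=; case/negP.
  by apply/forall_inP => j jS; apply/implyP => /(eP j jS) ->.
exists pe => [i /pe_private /andP [] //|i j iS jS].
by case/andP: (pe_private i iS) => _ /forall_inP /(_ j jS) /implyP h /h /eqP.
Qed.

Variables (S : {set V}) (pe : V -> E).
Hypotheses (pe_mem : {in S, forall i, pe i \in C i})
           (pe_private : {in S &, forall i j, pe i \in C j -> j = i}).

Lemma private_inj : {in S &, injective pe}.
Proof. by move=> i j iS jS pe_ij; apply/esym/pe_private; rewrite // pe_ij pe_mem. Qed.

Lemma CS_private_image (A W : {set V}) : A \subset S -> W \subset S ->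
  CS C A :&: pe @: W = pe @: (A :&: W).
Proof.
move=> /subsetP AS /subsetP WS; apply/setP => e; apply/idP/idP.
  rewrite inE => /andP [/bigcupP [j jA eCj] /imsetP [i iW ei]].
  move: eCj; rewrite ei => /(pe_private (WS _ iW) (AS _ jA)) ji; subst j.
  by rewrite imset_f // inE jA.
move=> /imsetP [i /setIP [iA iW] ->]; rewrite inE imset_f // andbT.
by apply/bigcupP; exists i; rewrite // pe_mem ?AS.
Qed.

Lemma card_private_image (W : {set V}) : W \subset S -> #|pe @: W| = #|W|.
Proof. by move=> /subsetP WS; rewrite card_in_imset //; apply: sub_in2 private_inj. Qed.

Lemma Fdet_private_image (A W : {set V}) : A \subset S -> W \subset S ->
  Fdet C A (pe @: W) = #|A :&: W|.
Proof.
move=> AS WS; rewrite /Fdet CS_private_image // card_private_image //.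
by rewrite subIset ?AS.
Qed.

End PrivateElements.

Section CoverStrategies.

Variables (R : realFieldType) (V E : finType) (C : V -> {set E}) (S : {set V}) (s : seq V).
Hypotheses (s_uniq : uniq s) (s_S : s =i S).

Lemma window_subset b k : window s b k \subset S.
Proof. by apply/subsetP => i /mem_window; rewrite s_S. Qed.

Lemma sum_Fdet_window_ge b (T : {set E}) : set_cover C S -> (b <= size s)%N ->
  (#|T| * b <= \sum_(k < size s) Fdet C (window s b k) T)%N.
Proof.
move=> /eqP coverS bs.
have cover e : exists i, (i \in S) && (e \in C i).
  have /bigcupP [i iS eCi] : e \in CS C S by rewrite coverS inE.
  by exists i; rewrite iS.
pose h e := xchoose (cover e); have hP e : (h e \in S) && (e \in C (h e)) := xchooseP (cover e).
rewrite -sum_nat_const (eq_bigr (fun e => \sum_(k < size s) (h e \in window s b k)))%N.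
  rewrite exchange_big /=; apply: leq_sum => k _; rewrite /Fdet card_setI_sum.
  apply: leq_sum => e _; case: (boolP (h e \in _)) => //= heW; rewrite lt0b.
  by apply/bigcupP; exists (h e); case/andP: (hP e).
by move=> e _; rewrite sum_mem_window // s_S; case/andP: (hP e).
Qed.

Lemma cover_cyclic_lower b1 b2 (T : {set E}) : set_cover C S ->
  (0 < size s)%N -> (b1 <= size s)%N -> (#|T| <= b2)%N ->
  b2%:R * (b1%:R / (size s)%:R - 1) <= - U2 C (cyclic R s b1) (point R T).
Proof.
move=> coverS s_gt0 b1s Tb2; have n_gt0 : 0 < (size s)%:R :> R by rewrite ltr0n.
rewrite oppr_U2_point_r sum_cyclic_mul sumrB sumr_const card_ord ler_pdivlMr //.
rewrite -mulrA mulrBl mul1r divfK ?gt_eqF // -[_ *+ size s]mulr_natr.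
have : ((#|T| * b1)%:R : R) <= \sum_(k < size s) (Fdet C (window s b1 k) T)%:R.
  by rewrite -natr_sum ler_nat sum_Fdet_window_ge.
have : (#|T|%:R : R) <= b2%:R by rewrite ler_nat.
have : (b1%:R : R) <= (size s)%:R by rewrite ler_nat.
rewrite natrM; nra.
Qed.

Lemma cover_private_upper (pe : V -> E) b1 b2 (sigma1 : {set V} -> R) :
  {in S, forall i, pe i \in C i} -> {in S &, forall i j, pe i \in C j -> j = i} ->
  (0 < size s)%N -> (b2 <= size s)%N -> mixed b1 sigma1 -> basis_sub sigma1 S ->
  exists2 T : {set E}, (#|T| <= b2)%N &
    - U2 C sigma1 (point R T) <= b2%:R * (b1%:R / (size s)%:R - 1).
Proof.
move=> pe_mem pe_priv s_gt0 b2s mixed1 basis1.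
pose T k := pe @: window s b2 k.
have cardT k : #|T k| = b2.
  by rewrite (card_private_image pe_mem pe_priv) ?window_subset // card_window // (minn_idPl b2s).
suff [k le_v] : exists k : 'I_(size s), - U2 C sigma1 (point R (T k)) <=
    b2%:R * (b1%:R / (size s)%:R - 1) by exists (T k); rewrite ?cardT.
apply: exists_le_mean => //.
under eq_bigr => k _ do rewrite oppr_U2_point_r.
rewrite exchange_big /=; under eq_bigr => A _ do rewrite -mulr_sumr.
apply: (mixed_sum_le mixed1 basis1) => A Ab1 AS.
under eq_bigr => k _ do rewrite (Fdet_private_image pe_mem pe_priv) ?window_subset // cardT.
rewrite sumrB -natr_sum sum_card_setI_window //; last first.
  by move=> i /(subsetP AS); rewrite s_S.
have n_neq0 : (size s)%:R != 0 :> R by rewrite pnatr_eq0 -lt0n.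
have -> : (size s)%:R * (b2%:R * (b1%:R / (size s)%:R - 1)) =
          b2%:R * b1%:R - b2%:R * (size s)%:R :> R by field.
have : (#|A|%:R : R) <= b1%:R by rewrite ler_nat.
have : 0 <= (b2%:R : R) by [].
by rewrite sumr_const card_ord natrM -[_ *+ size s]mulr_natr; nra.
Qed.

End CoverStrategies.

Lemma subr_minn_ratio (R : realFieldType) b m : (0 < m)%N ->
  1 - (minn b m)%:R / m%:R = Num.max 0 (1 - b%:R / m%:R) :> R.
Proof.
move=> m_gt0; have m_gt0R : 0 < m%:R :> R by rewrite ltr0n.
have [bm|mb] := leqP b m.
  by rewrite max_r // subr_ge0 ler_pdivrMr // mul1r ler_nat.
rewrite divff ?gt_eqF // subrr max_l //.
by rewrite subr_le0 ler_pdivlMr // mul1r ler_nat ltnW.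
Qed.

Section PackingStrategies.

Variables (R : realFieldType) (V E : finType) (C : V -> {set E}) (T' : {set E}) (t : seq E).
Hypotheses (t_uniq : uniq t) (t_T' : t =i T').

Lemma U2_point_cyclic b2 (S : {set V}) : (0 < size t)%N -> (b2 <= size t)%N ->
  U2 C (point R S) (cyclic R t b2) = b2%:R * (1 - #|CS C S :&: T'|%:R / (size t)%:R).
Proof.
move=> t_gt0 b2t; have n_neq0 : (size t)%:R != 0 :> R by rewrite pnatr_eq0 -lt0n.
have window_T' k : window t b2 k \subset T' by apply/subsetP => e /mem_window; rewrite t_T'.
rewrite U2_point_l sum_cyclic_mul (eq_bigr (fun k : 'I_(size t) =>
    b2%:R - #|(CS C S :&: T') :&: window t b2 k|%:R)); last first.
  by move=> k _; rewrite card_window // (minn_idPl b2t) /Fdet -setIA (setIidPr (window_T' k)).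
rewrite sumrB sumr_const card_ord -natr_sum sum_card_setI_window //; last first.
  by move=> e /setIP [_]; rewrite t_T'.
by rewrite natrM -[_ *+ size t]mulr_natr; field.
Qed.

Lemma packing_cyclic_lower b1 b2 (S : {set V}) : set_packing C T' ->
  (0 < size t)%N -> (b2 <= size t)%N -> (#|S| <= b1)%N ->
  Num.max 0 (b2%:R * (1 - b1%:R / (size t)%:R)) <= U2 C (point R S) (cyclic R t b2).
Proof.
move=> packT' t_gt0 b2t Sb1.
rewrite U2_point_cyclic // -[X in Num.max X](mulr0 b2%:R) -maxr_pMr //.
rewrite -subr_minn_ratio // ler_wpM2l // lerD2l lerN2 ler_wpM2r ?invr_ge0 // ler_nat.
rewrite leq_min (leq_trans (Fdet_packing_le S packT')) //=.
by rewrite -(card_uniqP t_uniq) (eq_card t_T') subset_leq_card ?subsetIr.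
Qed.

Lemma packing_cover_upper (hv : E -> V) b1 b2 (sigma2 : {set E} -> R) :
  (forall e, e \in C (hv e)) -> (0 < size t)%N ->
  mixed b2 sigma2 -> basis_sub sigma2 T' ->
  exists2 S : {set V}, (#|S| <= b1)%N &
    U2 C (point R S) sigma2 <= Num.max 0 (b2%:R * (1 - b1%:R / (size t)%:R)).
Proof.
move=> hv_mem t_gt0 mixed2 basis2.
pose S k := hv @: window t b1 k.
have cardS k : (#|S k| <= b1)%N.
  by rewrite (leq_trans (leq_imset_card _ _)) // card_window // geq_minl.
suff [k le_v] : exists k : 'I_(size t), U2 C (point R (S k)) sigma2 <=
    Num.max 0 (b2%:R * (1 - b1%:R / (size t)%:R)) by exists (S k).
apply: exists_le_mean => //.
rewrite -[X in Num.max X](mulr0 b2%:R) -maxr_pMr // -subr_minn_ratio //.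
under eq_bigr => k _ do rewrite U2_point_l.
rewrite exchange_big /=; under eq_bigr => A _ do rewrite -mulr_sumr.
apply: (mixed_sum_le mixed2 basis2) => A Ab2 AT'.
have : ((#|A| * minn b1 (size t))%:R : R) <= \sum_(k < size t) (Fdet C (S k) A)%:R.
  rewrite -natr_sum ler_nat -(sum_card_setI_window t_uniq) ?geq_minr //; last first.
    by move=> e /(subsetP AT'); rewrite t_T'.
  apply: leq_sum => k _; rewrite -window_minn /Fdet setIC subset_leq_card // setSI //.
  by apply/subsetP => e eW; apply/bigcupP; exists (hv e); rewrite ?imset_f.
have n_neq0 : (size t)%:R != 0 :> R by rewrite pnatr_eq0 -lt0n.
have -> : (size t)%:R * (b2%:R * (1 - (minn b1 (size t))%:R / (size t)%:R)) =
          b2%:R * ((size t)%:R - (minn b1 (size t))%:R) :> R by field.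
have : (#|A|%:R : R) <= b2%:R by rewrite ler_nat.
have : ((minn b1 (size t))%:R : R) <= (size t)%:R by rewrite ler_nat geq_minr.
by rewrite sumrB sumr_const card_ord natrM -[_ *+ size t]mulr_natr; nra.
Qed.

End PackingStrategies.

Theorem proposition1 (R : realFieldType) (V E : finType) (C : V -> {set E})
  (b1 b2 : nat)
  (hV : (0 < #|V|)%N) (hE : (0 < #|E|)%N)
  (hcov : forall e : E, exists i : V, e \in C i)
  (hb1 : (0 < b1)%N) (hb2 : (0 < b2)%N)
  (hn : (b1 < nstar C)%N) (hm : (b2 < mstar C)%N) :
  (* (i) *)
  (forall (S' : {set V}) (s : seq V),
     minimal_set_cover C S' -> uniq s -> (forall i, (i \in s) = (i \in S')) ->
     let v := b2%:R * (b1%:R / #|S'|%:R - 1) : R in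
     [/\ mixed b1 (cyclic R s b1), basis_sub (cyclic R s b1) S',
         (forall T : {set E}, (#|T| <= b2)%N -> v <= - U2 C (cyclic R s b1) (point R T)),
         (exists2 T : {set E}, (#|T| <= b2)%N & - U2 C (cyclic R s b1) (point R T) = v) &
         (forall sigma1 : {set V} -> R, mixed b1 sigma1 -> basis_sub sigma1 S' ->
            exists2 T : {set E}, (#|T| <= b2)%N & - U2 C sigma1 (point R T) <= v)])
  /\
  (* (ii) *)
  (forall (T' : {set E}) (t : seq E),
     set_packing C T' -> (b2 <= #|T'|)%N -> uniq t -> (forall e, (e \in t) = (e \in T')) ->
     let v := Num.max 0 (b2%:R * (1 - b1%:R / #|T'|%:R)) : R in
     [/\ mixed b2 (cyclic R t b2), basis_sub (cyclic R t b2) T',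
         (forall S : {set V}, (#|S| <= b1)%N -> v <= U2 C (point R S) (cyclic R t b2)),
         (exists2 S : {set V}, (#|S| <= b1)%N & U2 C (point R S) (cyclic R t b2) = v) &
         (forall sigma2 : {set E} -> R, mixed b2 sigma2 -> basis_sub sigma2 T' ->
            exists2 S : {set V}, (#|S| <= b1)%N & U2 C (point R S) sigma2 <= v)]).
Proof.
split=> [S' s minS' s_uniq s_S' v | T' t packT' b2T' t_uniq t_T' v].
  have coverS' := minS'.1.
  have n_eq : #|S'| = size s by rewrite -(eq_card s_S') (card_uniqP s_uniq).
  have b1s : (b1 < size s)%N by rewrite -n_eq (leq_trans hn) ?nstar_le_cover.
  have b2s : (b2 < size s)%N by rewrite -n_eq (leq_trans hm) ?mstar_le_cover.
  have s_gt0 : (0 < size s)%N := ltn_trans hb1 b1s.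
  have [pe pe_mem pe_priv] := minimal_set_cover_private_map minS' hE.
  have cyc_mixed := mixed_cyclic R b1 s_uniq s_gt0.
  have cyc_basis : basis_sub (cyclic R s b1) S' by apply: basis_sub_cyclic => i; rewrite s_S'.
  have lower T := cover_cyclic_lower R s_uniq s_S' (b2 := b2) (T := T) coverS' s_gt0 (ltnW b1s).
  have upper := cover_private_upper s_uniq s_S' pe_mem pe_priv s_gt0 (ltnW b2s).
  rewrite /v n_eq; split=> // [|sigma1 /upper/[apply] //].
  have [T Tb2 le_v] := upper _ _ _ cyc_mixed cyc_basis.
  by exists T => //; apply/le_anti; rewrite le_v lower.
have n_eq : #|T'| = size t by rewrite -(eq_card t_T') (card_uniqP t_uniq).
rewrite n_eq in b2T'; have t_gt0 : (0 < size t)%N := leq_trans hb2 b2T'.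
have cyc_mixed := mixed_cyclic R b2 t_uniq t_gt0.
have cyc_basis : basis_sub (cyclic R t b2) T' by apply: basis_sub_cyclic => e; rewrite t_T'.
have lower S := packing_cyclic_lower R t_uniq t_T' (b1 := b1) (S := S) packT' t_gt0 b2T'.
have upper := packing_cover_upper t_uniq t_T' b1 (fun e => xchooseP (hcov e)) t_gt0.
rewrite /v n_eq; split=> // [|sigma2 /upper/[apply] //].
have [S Sb1 le_v] := upper _ _ _ cyc_mixed cyc_basis.
by exists S => //; apply/le_anti; rewrite le_v lower.
Qed.
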